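(* For every real $n\ge2$, \[ \max_{a\in[0,1]}\Bigl((n-1)e^{\frac{1-a^2}{n}}+e^{\frac{1-(n(1-a)+a)^2}{n}}\Bigr)\le n. \] *)

From Stdlib Require Import Reals.
Open Scope R_scope.

From Stdlib Require Import Reals Lra Lia List Factorial.
From Coquelicot Require Import Coquelicot.
Import ListNotations.
Open Scope R_scope.

(** Put x = (1 - a^2)/n and y = ((n(1-a)+a)^2 - 1)/n, so that the claim reads
    (n-1) e^x + e^-y <= n with x, y >= 0.  Bound e^x by 1/P and e^-y by 1/Q, where
    P = 1 - x + x^2/2 - x^3/6 <= e^-x and Q = 1 + y + ... + y^4/24 <= e^y are Taylor
    polynomials.  It then suffices that (n-1) Q + P <= n P Q, a polynomial inequality
    in k = n - 2 >= 0 and u = 1 - a in [0,1]; it holds because n^7 (n P Q - (n-1) Q - P)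
    has nonnegative coefficients in the basis k^i u^j (1-u)^(d-j).
    These Taylor orders are needed: for n = 2 the left side is 2 e^(-u^2/2) cosh u,
    which agrees with 2 up to order u^4. *)

Lemma nonneg_of_derive_nonneg (f f' : R -> R) :
  (forall t, is_derive f t (f' t)) -> (forall t, 0 <= t -> 0 <= f' t) ->
  0 <= f 0 -> forall x, 0 <= x -> 0 <= f x.
Proof.
  intros Hf Hf' Hf0 x Hx.
  destruct (Req_dec x 0) as [->|Hx0]; [exact Hf0|].
  destruct (MVT_cor2 f f' 0 x) as [c [Hmvt Hc]].
  - lra.
  - intros t _; apply is_derive_Reals, Hf.
  - assert (0 <= f' c * (x - 0)) by (apply Rmult_le_pos; [apply Hf'|]; lra).
    lra.
Qed.

Definition exp_taylor (N : nat) (x : R) : R :=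
  sum_f_R0 (fun k => x ^ k / INR (fact k)) N.

Lemma exp_taylor_at_0 N : exp_taylor N 0 = 1.
Proof.
  induction N as [|N IH]; unfold exp_taylor in *.
  - simpl; field.
  - rewrite tech5, IH, pow_i by lia; field; apply INR_fact_neq_0.
Qed.

Lemma one_le_exp_taylor N x : 0 <= x -> 1 <= exp_taylor N x.
Proof.
  intros Hx; induction N as [|N IH]; unfold exp_taylor in *.
  - simpl; lra.
  - rewrite tech5.
    assert (0 <= x ^ S N / INR (fact (S N))).
    { apply Rdiv_le_0_compat; [apply pow_le; lra | apply INR_fact_lt_0]. }
    lra.
Qed.

Lemma is_derive_pow_div_fact m x :
  is_derive (fun t => t ^ S m / INR (fact (S m))) x (x ^ m / INR (fact m)).
Proof.
  assert (Hm := INR_fact_neq_0 m).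
  auto_derive; [exact I|].
  change (match m with 0%nat => 1 | S _ => INR m + 1 end) with (INR (S m)).
  change (fact m + m * fact m)%nat with (fact (S m)).
  rewrite fact_simpl, mult_INR.
  field; split; [exact Hm | apply not_0_INR; lia].
Qed.

Lemma is_derive_exp_taylor N x : is_derive (exp_taylor (S N)) x (exp_taylor N x).
Proof.
  induction N as [|N IH].
  - unfold exp_taylor; simpl; auto_derive; [exact I | field].
  - unfold exp_taylor; rewrite tech5.
    apply (is_derive_ext (fun t => exp_taylor (S N) t + t ^ S (S N) / INR (fact (S (S N))))).
    { intros t; unfold exp_taylor; now rewrite tech5. }
    apply (is_derive_plus _ _ _ _ _ IH), is_derive_pow_div_fact.
Qed.

Lemma is_derive_exp_taylor_opp N t :
  is_derive (fun x => exp_taylor (S N) (- x)) t (- exp_taylor N (- t)).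
Proof.
  assert (Hopp : is_derive (fun x : R => - x) t (-1)) by (auto_derive; [exact I | ring]).
  generalize (is_derive_comp _ _ t _ _ (is_derive_exp_taylor N (- t)) Hopp).
  now replace (- exp_taylor N (- t)) with (-1 * exp_taylor N (- t)) by ring.
Qed.

Lemma exp_neg_taylor_sign_succ s N :
  (forall x, 0 <= x -> 0 <= s * (exp_taylor N (- x) - exp (- x))) ->
  forall x, 0 <= x -> 0 <= - s * (exp_taylor (S N) (- x) - exp (- x)).
Proof.
  intros Hsign.
  apply (nonneg_of_derive_nonneg _ (fun t => s * (exp_taylor N (- t) - exp (- t)))).
  - intros t.
    replace (s * (exp_taylor N (- t) - exp (- t)))
      with (- s * (- exp_taylor N (- t) - - exp (- t))) by ring.
    apply is_derive_scal, (is_derive_minus (fun x => exp_taylor (S N) (- x))).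
    + apply is_derive_exp_taylor_opp.
    + auto_derive; [exact I | ring].
  - exact Hsign.
  - rewrite Ropp_0, exp_taylor_at_0, exp_0; lra.
Qed.

Lemma exp_neg_taylor_sign N x :
  0 <= x -> 0 <= (-1) ^ N * (exp_taylor N (- x) - exp (- x)).
Proof.
  revert x; induction N as [|N IH]; intros x Hx.
  - unfold exp_taylor; simpl.
    assert (exp (- x) <= exp 0).
    { destruct (Req_dec x 0) as [->|Hx0]; [rewrite Ropp_0; lra|].
      left; apply exp_increasing; lra. }
    rewrite exp_0 in *; lra.
  - replace ((-1) ^ S N) with (- (-1) ^ N) by (simpl; ring).
    now apply exp_neg_taylor_sign_succ.
Qed.

Lemma exp_taylor_odd_le_exp_neg N x :
  0 <= x -> exp_taylor (S (2 * N)) (- x) <= exp (- x).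
Proof.
  intros Hx; generalize (exp_neg_taylor_sign (S (2 * N)) x Hx).
  rewrite pow_1_odd; lra.
Qed.

(** [bernstein_poly [c_0; ...; c_d] u = sum_j c_j u^j (1-u)^(d-j)]. *)
Fixpoint bernstein_poly (c : list R) (u : R) : R :=
  match c with
  | [] => 0
  | c0 :: cs => c0 * (1 - u) ^ length cs + u * bernstein_poly cs u
  end.

Lemma bernstein_poly_ge0 c u :
  List.Forall (Rle 0) c -> 0 <= u <= 1 -> 0 <= bernstein_poly c u.
Proof.
  intros Hc Hu; induction Hc as [|c0 cs Hc0 _ IH]; simpl; [lra|].
  assert (0 <= (1 - u) ^ length cs) by (apply pow_le; lra).
  assert (0 <= u * bernstein_poly cs u) by (apply Rmult_le_pos; lra).
  assert (0 <= c0 * (1 - u) ^ length cs) by (apply Rmult_le_pos; lra).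
  lra.
Qed.

Fixpoint horner_bernstein (rows : list (list R)) (k u : R) : R :=
  match rows with
  | [] => 0
  | r :: rs => bernstein_poly r u + k * horner_bernstein rs k u
  end.

Lemma horner_bernstein_ge0 rows k u :
  List.Forall (List.Forall (Rle 0)) rows -> 0 <= k -> 0 <= u <= 1 ->
  0 <= horner_bernstein rows k u.
Proof.
  intros Hrows Hk Hu; induction Hrows as [|r rs Hr _ IH]; simpl; [lra|].
  assert (0 <= bernstein_poly r u) by now apply bernstein_poly_ge0.
  assert (0 <= k * horner_bernstein rs k u) by now apply Rmult_le_pos.
  lra.
Qed.

(** Row [i] holds the Bernstein coefficients of [k^i]. *)
Definition key_certificate : list (list R) :=
  [ [0; 0; 0; 0; 16; 160; 6632/9; 2056; 34595/9; 45232/9; 4649; 27016/9; 15527/12; 4033/12; 959/24]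
  ; [0; 0; 64; 2048/3; 10264/3; 10704; 210836/9; 342364/9; 283763/6; 409996/9; 303995/9; 37503/2; 22070/3; 43631/24; 10201/48]
  ; [0; 0; 256; 8320/3; 41860/3; 129512/3; 825410/9; 1273646/9; 5891189/36; 1297207/9; 3492799/36; 1772371/36; 865133/48; 34237/8; 7927/16]
  ; [0; 0; 432; 14272/3; 72754/3; 75652; 1448225/9; 246207; 20069747/72; 4262185/18; 606007/4; 434791/6; 1809463/72; 5773; 23999/36]
  ; [0; 0; 400; 4480; 23226; 73600; 1427441/9; 2202115/9; 1108505/4; 2095157/9; 5224591/36; 200048/3; 796217/36; 44422/9; 573]
  ; [0; 0; 220; 7520/3; 39776/3; 42942; 1703233/18; 1341362/9; 3087919/18; 1306121/9; 3232631/36; 723757/18; 230983/18; 100307/36; 23635/72]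
  ; [0; 0; 72; 2504/3; 27145/6; 15100; 103288/3; 168650/3; 602606/9; 523552/9; 218459/6; 16113; 357523/72; 4185/4; 9119/72]
  ; [0; 0; 13; 460/3; 2579/3; 3006; 14505/2; 37832/3; 64029/4; 132400/9; 172111/18; 12770/3; 45635/36; 2305/9; 389/12]
  ; [0; 0; 1; 12; 72; 835/3; 4547/6; 1502; 26029/12; 20092/9; 56725/36; 6526/9; 1871/9; 1397/36; 379/72]
  ; [0; 0; 0; 0; 1/2; 5; 73/3; 220/3; 437/3; 190; 1889/12; 703/9; 64/3; 79/24; 71/144]
  ; [0; 0; 0; 0; 0; 0; 1/6; 1; 31/12; 17/6; 7/6; 1/12; 1/48]
  ; [0; 0; 0; 0; 0; 0; 0; 0; 1/24; 0; 0] ].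

Lemma key_certificate_ge0 : List.Forall (List.Forall (Rle 0)) key_certificate.
Proof.
  unfold key_certificate.
  repeat (apply List.Forall_cons || apply List.Forall_nil); lra.
Qed.

Lemma reciprocal_taylor_inequality n a :
  2 <= n -> 0 <= a <= 1 ->
  let P := exp_taylor 3 (- ((1 - a ^ 2) / n)) in
  let Q := exp_taylor 4 (((n * (1 - a) + a) ^ 2 - 1) / n) in
  (n - 1) * Q + P <= n * P * Q.
Proof.
  intros Hn Ha P Q.
  assert (Hcert : n ^ 7 * (n * P * Q - (n - 1) * Q - P)
                  = horner_bernstein key_certificate (n - 2) (1 - a)).
  { unfold P, Q, exp_taylor, key_certificate.
    cbn [sum_f_R0 fact INR Nat.mul Nat.add horner_bernstein bernstein_poly length].
    field; lra. }
  assert (Hpos : 0 <= horner_bernstein key_certificate (n - 2) (1 - a)).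
  { apply horner_bernstein_ge0; [exact key_certificate_ge0 | lra | lra]. }
  assert (Hn7 : 0 < n ^ 7) by (apply pow_lt; lra).
  assert (0 <= n * P * Q - (n - 1) * Q - P).
  { apply (Rmult_le_reg_l (n ^ 7)); lra. }
  lra.
Qed.

Lemma mean_exp_le_of_reciprocal_bounds n x y P Q :
  1 < n -> P <= exp (- x) -> 1 <= Q <= exp y ->
  (n - 1) * Q + P <= n * P * Q ->
  (n - 1) * exp x + exp (- y) <= n.
Proof.
  intros Hn HP [HQ1 HQ] Hkey.
  assert (HP0 : 0 < P).
  { destruct (Rlt_or_le 0 P) as [|HPnonpos]; [assumption|].
    assert (0 <= - P * (n * Q - 1)) by (apply Rmult_le_pos; nra).
    assert (0 < (n - 1) * Q) by (apply Rmult_lt_0_compat; lra).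
    lra. }
  assert (Hx : exp x <= / P).
  { replace (exp x) with (/ exp (- x)) by (rewrite exp_Ropp; apply Rinv_inv).
    apply Rinv_le_contravar; lra. }
  assert (Hy : exp (- y) <= / Q) by (rewrite exp_Ropp; apply Rinv_le_contravar; lra).
  assert (Hmean : (n - 1) * / P + / Q <= n).
  { apply (Rmult_le_reg_r (P * Q)); [nra|].
    replace (((n - 1) * / P + / Q) * (P * Q)) with ((n - 1) * Q + P) by (field; lra).
    lra. }
  assert ((n - 1) * exp x <= (n - 1) * / P) by (apply Rmult_le_compat_l; lra).
  lra.
Qed.

Theorem proposition3p2 (n : R) (hn : 2 <= n) :
  forall a : R, 0 <= a <= 1 ->
    (n - 1) * exp ((1 - a ^ 2) / n) + exp ((1 - (n * (1 - a) + a) ^ 2) / n) <= n.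
Proof.
  intros a Ha.
  set (x := (1 - a ^ 2) / n).
  set (y := ((n * (1 - a) + a) ^ 2 - 1) / n).
  assert (Hx : 0 <= x).
  { assert (a ^ 2 <= 1 ^ 2) by (apply pow_incr; lra).
    apply Rdiv_le_0_compat; rewrite pow1 in *; lra. }
  assert (Hy : 0 <= y).
  { assert (1 ^ 2 <= (n * (1 - a) + a) ^ 2) by (apply pow_incr; nra).
    apply Rdiv_le_0_compat; rewrite pow1 in *; lra. }
  replace ((1 - (n * (1 - a) + a) ^ 2) / n) with (- y) by (unfold y; field; lra).
  apply (mean_exp_le_of_reciprocal_bounds n x y (exp_taylor 3 (- x)) (exp_taylor 4 y)).
  - lra.
  - exact (exp_taylor_odd_le_exp_neg 1 x Hx).
  - split; [now apply one_le_exp_taylor | now apply exp_ge_taylor].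
  - now apply reciprocal_taylor_inequality.
Qed.
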